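(* Let $S$ be a nonempty set, $G$ a group of permutations of $S$, and $s\in S$. Then $SV_G$ is generated by $SV\cup\iota_1^s(G)$.
   Context: Let $\mathfrak C=\{0,1\}^{\omega}$ be the Cantor set, $S$ a nonempty set, and $G$ a subgroup of the symmetric group of $S$. Let $\mathfrak C^S$ be the space of all functions $S\to\mathfrak C$ with the product topology. For a function $\psi\colon S\to\{0,1\}^*$ with $\psi(s)=\varnothing$ for all but finitely many $s$, the dyadic brick $B(\psi)$ is the set of $\kappa\in\mathfrak C^S$ such that $\psi(s)$ is a prefix of $\kappa(s)$ for all $s\in S$; the canonical homeomorphism $\Phi_\psi\colon\mathfrak C^S\to B(\psi)$ is $\Phi_\psi(\kappa)(s)=\psi(s)\cdot\kappa(s)$. For $\gamma\in G$ let $\tau_\gamma(\kappa)(s)=\kappa(\gamma^{-1}s)$. The twist homeomorphism $B(\varphi)\to B(\psi)$ associated to $\gamma$ is $\Phi_\psi\circ\tau_\gamma\circ\Phi_\varphi^{-1}$. The twisted Brin–Thompson group $SV_G$ is the group of all homeomorphisms $h$ of $\mathfrak C^S$ for which there exist two partitions $B(\varphi_1),\dots,B(\varphi_n)$ and $B(\psi_1),\dots,B(\psi_n)$ of $\mathfrak C^S$ into dyadic bricks and $\gamma_1,\dots,\gamma_n\in G$ such that $h|_{B(\varphi_i)}$ is the twist homeomorphism $B(\varphi_i)\to B(\psi_i)$ associated to $\gamma_i$. $SV$ denotes the subgroup obtained when all $\gamma_i$ are required to be trivial (the Brin–Thompson group). For $s\in S$ let $\psi_s\colon S\to\{0,1\}^*$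 be given by $\psi_s(s)=1$ and $\psi_s(t)=\varnothing$ for $t\neq s$, and define $\iota_1^s\colon G\to SV_G$ by letting $\iota_1^s(\gamma)$ be the identity on $\{\kappa:\kappa(s)\text{ begins with }0\}$ and equal to $\Phi_{\psi_s}\circ\tau_\gamma\circ\Phi_{\psi_s}^{-1}$ on $B(\psi_s)$. *)

From Stdlib Require Import Arith List Classical ClassicalEpsilon FunctionalExtensionality.
Import ListNotations.
Set Implicit Arguments.

Definition Cantor := nat -> bool.
Definition word := list bool.
Definition Config (S : Type) := S -> Cantor.

Definition is_prefix (w : word) (x : Cantor) : Prop :=
  forall i, i < length w -> nth i w false = x i.

Definition wcat (w : word) (x : Cantor) : Cantor :=
  fun i => if i <? length w then nth i w false else x (i - length w).

Definition wdrop (n : nat) (x : Cantor) : Cantor := fun i => x (i + n).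

Definition fin_supp (S : Type) (psi : S -> word) : Prop :=
  exists l : list S, forall t, ~ In t l -> psi t = [].

Definition in_brick (S : Type) (psi : S -> word) (k : Config S) : Prop :=
  forall t, is_prefix (psi t) (k t).

Definition Phi (S : Type) (psi : S -> word) (k : Config S) : Config S :=
  fun t => wcat (psi t) (k t).
Definition Phi_inv (S : Type) (psi : S -> word) (k : Config S) : Config S :=
  fun t => wdrop (length (psi t)) (k t).

Record perm (S : Type) := Perm {
  pfun : S -> S;
  pinv : S -> S;
  pfunK : forall x, pinv (pfun x) = x;
  pinvK : forall x, pfun (pinv x) = x }.

Definition perm_id (S : Type) : perm S :=
  @Perm S (fun x => x) (fun x => x) (fun x => eq_refl) (fun x => eq_refl).

Definition is_subgroup (S : Type) (G : perm S -> Prop) : Prop :=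
  (exists e, G e /\ forall x, pfun e x = x) /\
  (forall g h, G g -> G h -> exists gh, G gh /\ forall x, pfun gh x = pfun g (pfun h x)) /\
  (forall g, G g -> exists gi, G gi /\ forall x, pfun gi x = pinv g x) /\
  (forall g h, (forall x, pfun g x = pfun h x) -> G g -> G h).

Definition tau (S : Type) (g : perm S) (k : Config S) : Config S :=
  fun t => k (pinv g t).

Definition twist (S : Type) (phi psi : S -> word) (g : perm S) (k : Config S) : Config S :=
  Phi psi (tau g (Phi_inv phi k)).

(** Product topology on C^S: dyadic bricks form a base, so continuity is
    expressed with bricks as basic neighbourhoods. *)
Definition continuous_cfg (S : Type) (h : Config S -> Config S) : Prop :=
  forall k psi, fin_supp psi -> in_brick psi (h k) ->
    exists phi, fin_supp phi /\ in_brick phi k /\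
      forall k', in_brick phi k' -> in_brick psi (h k').

Definition is_homeo (S : Type) (h : Config S -> Config S) : Prop :=
  exists h', (forall k, h' (h k) = k) /\ (forall k, h (h' k) = k) /\
    continuous_cfg h /\ continuous_cfg h'.

Definition brick_partition (S : Type) (l : list (S -> word)) : Prop :=
  Forall (@fin_supp S) l /\
  (forall k, exists i, i < length l /\ in_brick (nth i l (fun _ => [])) k) /\
  (forall k i j, i < length l -> j < length l ->
     in_brick (nth i l (fun _ => [])) k -> in_brick (nth j l (fun _ => [])) k -> i = j).

Record piece (S : Type) := Piece { pdom : S -> word; pcod : S -> word; pgam : perm S }.

Definition twisted_by (S : Type) (P : perm S -> Prop) (h : Config S -> Config S) : Prop :=
  is_homeo h /\
  exists l : list (piece S),
    brick_partition (map (@pdom S) l) /\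
    brick_partition (map (@pcod S) l) /\
    Forall (fun p => P (pgam p)) l /\
    Forall (fun p => forall k, in_brick (pdom p) k -> h k = twist (pdom p) (pcod p) (pgam p) k) l.

Definition SVG (S : Type) (G : perm S -> Prop) := twisted_by G.
Definition SV (S : Type) := twisted_by (fun g : perm S => forall x, pfun g x = x).

Definition psi_s (S : Type) (s : S) : S -> word :=
  fun t => if excluded_middle_informative (t = s) then [true] else [].

Definition iota1 (S : Type) (s : S) (g : perm S) (k : Config S) : Config S :=
  if k s 0 then twist (psi_s s) (psi_s s) g k else k.

Inductive generated (S : Type) (A : (Config S -> Config S) -> Prop) :
  (Config S -> Config S) -> Prop :=
| gen_base f : A f -> generated A f
| gen_id : generated A (fun k => k)
| gen_comp f g : generated A f -> generated A g -> generated A (fun k => f (g k))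
| gen_inv f g : generated A f -> (forall k, g (f k) = k) -> (forall k, f (g k) = k) ->
    generated A g.

From Stdlib Require Import Arith List Lia ClassicalEpsilon FunctionalExtensionality.
Import ListNotations.

(* An element of SV_G is a finite family of twists B(phi_i) -> B(psi_i) by gamma_i in G.
   Precomposing with an element of SV that sends each B(phi_i) onto the i-th brick of the
   partition { k(s) begins with 1 }, { k(s) begins with 01 }, ..., { k(s) begins with 0^n },
   and postcomposing with an element of SV that sends it back onto B(psi_i), it becomes a
   product of local twists: maps acting by tau_gamma on one brick { k(s) begins with w } and
   trivially elsewhere.  For w = 1 this is iota_1^s(gamma); for w = 0 it is conjugate to it in
   SV; for w empty it is the product of these two followed by an element of SV moving the first
   letter of k(s) to the coordinate gamma(s); and the local twist for c d u is conjugate in SV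
   to the one for c u.  Conversely SV_G is a group containing SV and iota_1^s(G): a composite
   of two twisted maps is again piecewise a twist, on cylinders refining the domain bricks of
   the first factor and the preimages of those of the second. *)

Section Twists.

Context {S : Type}.
Implicit Types (phi chi psi : S -> word) (g h : perm S) (k : Config S).

Lemma config_ext k k' : (forall t i, k t i = k' t i) -> k = k'.
Proof.
  intros H; apply functional_extensionality; intro t.
  apply functional_extensionality; intro i; apply H.
Qed.

Lemma twistE phi psi g k t i :
  twist phi psi g k t i =
  if i <? length (psi t) then nth i (psi t) false
  else k (pinv g t) (i - length (psi t) + length (phi (pinv g t))).
Proof. reflexivity. Qed.

Lemma in_brickE phi k :
  in_brick phi k <-> forall t i, i < length (phi t) -> k t i = nth i (phi t) false.
Proof. unfold in_brick, is_prefix; split; intros H t i Hi; symmetry; apply H; auto. Qed.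

Lemma in_brick_twist phi psi g k : in_brick psi (twist phi psi g k).
Proof.
  apply in_brickE; intros t i Hi; rewrite twistE.
  destruct (Nat.ltb_spec i (length (psi t))); [reflexivity | lia].
Qed.

Lemma twist_twist phi chi psi g1 g2 g3 k :
  (forall x, pinv g3 x = pinv g1 (pinv g2 x)) ->
  twist chi psi g2 (twist phi chi g1 k) = twist phi psi g3 k.
Proof.
  intros Hg; apply config_ext; intros t i.
  rewrite !twistE, Hg.
  destruct (Nat.ltb_spec i (length (psi t))); [reflexivity|].
  destruct (Nat.ltb_spec (i - length (psi t) + length (chi (pinv g2 t)))
                         (length (chi (pinv g2 t)))); [lia|].
  f_equal; lia.
Qed.

Lemma twist_id phi g k :
  in_brick phi k -> (forall x, pinv g x = x) -> twist phi phi g k = k.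
Proof.
  rewrite in_brickE; intros Hk Hg; apply config_ext; intros t i.
  rewrite twistE, Hg.
  destruct (Nat.ltb_spec i (length (phi t))).
  - symmetry; apply Hk; auto.
  - f_equal; lia.
Qed.

Definition perm_comp g h : perm S.
Proof.
  refine (@Perm S (fun x => pfun g (pfun h x)) (fun x => pinv h (pinv g x)) _ _);
    intros x; rewrite ?pfunK, ?pinvK; reflexivity.
Defined.

Definition perm_inv g : perm S := @Perm S (pinv g) (pfun g) (pinvK g) (pfunK g).

Lemma twistK phi psi g k :
  in_brick phi k -> twist psi phi (perm_inv g) (twist phi psi g k) = k.
Proof.
  intros Hk; rewrite (@twist_twist phi psi phi g (perm_inv g) (perm_id S)).
  - apply twist_id; auto.
  - intros x; simpl; rewrite pfunK; reflexivity.
Qed.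

Lemma twistVK phi psi g k :
  in_brick psi k -> twist phi psi g (twist psi phi (perm_inv g) k) = k.
Proof.
  intros Hk; rewrite (@twist_twist psi phi psi (perm_inv g) g (perm_id S)).
  - apply twist_id; auto.
  - intros x; simpl; rewrite pinvK; reflexivity.
Qed.

End Twists.

Section Cylinders.

Context {S : Type}.
Implicit Types (phi psi : S -> word) (g : perm S) (k x : Config S).

Definition prefix_word (y : Cantor) (n : nat) : word := map y (seq 0 n).

Definition cylinder x (n : S -> nat) : S -> word := fun u => prefix_word (x u) (n u).

Lemma length_prefix_word y n : length (prefix_word y n) = n.
Proof. unfold prefix_word; rewrite length_map, length_seq; auto. Qed.

Lemma nth_prefix_word y n i : i < n -> nth i (prefix_word y n) false = y i.
Proof.
  intros H; unfold prefix_word.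
  rewrite (nth_indep _ false (y 0)) by (rewrite length_map, length_seq; auto).
  rewrite map_nth, seq_nth; auto.
Qed.

Lemma in_cylinder x n k : in_brick (cylinder x n) k <-> forall u i, i < n u -> k u i = x u i.
Proof.
  rewrite in_brickE; unfold cylinder; split; intros H u i Hi.
  - rewrite H by (rewrite length_prefix_word; auto); apply nth_prefix_word; auto.
  - rewrite length_prefix_word in Hi; rewrite H by auto; symmetry; apply nth_prefix_word; auto.
Qed.

Lemma in_brick_cylinder phi x n k :
  in_brick phi x -> (forall u, length (phi u) <= n u) ->
  in_brick (cylinder x n) k -> in_brick phi k.
Proof.
  rewrite in_cylinder, !in_brickE; intros Hx Hn Hk t i Hi.
  rewrite Hk by (specialize (Hn t); lia); apply Hx; auto.
Qed.

Lemma in_cylinder_max phi psi y z :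
  in_brick phi y -> in_brick psi y -> in_brick phi z -> in_brick psi z ->
  in_brick (cylinder y (fun u => Nat.max (length (phi u)) (length (psi u)))) z.
Proof.
  rewrite in_cylinder, !in_brickE; intros Hy1 Hy2 Hz1 Hz2 u i Hi.
  destruct (Nat.ltb_spec i (length (phi u))).
  - rewrite Hz1, Hy1; auto.
  - rewrite Hz2, Hy2; auto; lia.
Qed.

Lemma fin_supp_cylinder x n (l : list S) :
  (forall u, ~ In u l -> n u = 0) -> fin_supp (cylinder x n).
Proof. intros H; exists l; intros t Ht; unfold cylinder; rewrite H; auto. Qed.

Section Restriction.

Variables (phi psi : S -> word) (g : perm S) (x : Config S) (nd m : S -> nat).
Hypotheses (Hx : in_brick phi x) (Hnd : forall u, length (phi u) <= nd u)
  (Hm : forall t, length (psi t) <= m t)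
  (Hdepth : forall u, nd u - length (phi u) = m (pfun g u) - length (psi (pfun g u))).

Let Hdepth' t : nd (pinv g t) - length (phi (pinv g t)) = m t - length (psi t).
Proof. rewrite Hdepth, pinvK; reflexivity. Qed.

Lemma in_cylinder_twist k : in_brick phi k ->
  in_brick (cylinder x nd) k <-> in_brick (cylinder (twist phi psi g x) m) (twist phi psi g k).
Proof.
  intros Hk; rewrite !in_cylinder; rewrite in_brickE in Hx, Hk; split.
  - intros H t i Hi; rewrite !twistE.
    destruct (Nat.ltb_spec i (length (psi t))); [reflexivity|].
    apply H; specialize (Hdepth' t); specialize (Hnd (pinv g t)); lia.
  - intros H u j Hj.
    destruct (Nat.ltb_spec j (length (phi u))); [rewrite Hk, Hx; auto|].
    set (i := j - length (phi u) + length (psi (pfun g u))).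
    specialize (H (pfun g u) i); rewrite !twistE, pfunK in H.
    destruct (Nat.ltb_spec i (length (psi (pfun g u)))); [unfold i in *; lia|].
    replace (i - length (psi (pfun g u)) + length (phi u)) with j in H by (unfold i; lia).
    apply H; unfold i; specialize (Hdepth u); specialize (Hm (pfun g u)); lia.
Qed.

Lemma twist_cylinder k : in_brick (cylinder x nd) k ->
  twist phi psi g k = twist (cylinder x nd) (cylinder (twist phi psi g x) m) g k.
Proof.
  intros Hc.
  assert (Hk : in_brick phi k) by (apply in_brick_cylinder with x nd; auto).
  pose proof (proj1 (in_cylinder_twist k Hk) Hc) as Himg; rewrite in_cylinder in Himg.
  apply config_ext; intros t i.
  rewrite (twistE (cylinder x nd)); unfold cylinder; rewrite !length_prefix_word.
  destruct (Nat.ltb_spec i (m t)).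
  - rewrite Himg by auto; symmetry; apply nth_prefix_word; auto.
  - rewrite twistE.
    destruct (Nat.ltb_spec i (length (psi t))); [specialize (Hm t); lia|].
    f_equal; specialize (Hdepth' t); specialize (Hnd (pinv g t)); specialize (Hm t); lia.
Qed.

End Restriction.

End Cylinders.

Section Counting.

Context {A : Type} (P : A -> Prop).

Definition indicator (X : Prop) : nat := if excluded_middle_informative X then 1 else 0.

Fixpoint countP (l : list A) : nat :=
  match l with [] => 0 | a :: l' => indicator (P a) + countP l' end.

Lemma indicator_T (X : Prop) : X -> indicator X = 1.
Proof. unfold indicator; destruct (excluded_middle_informative X); tauto. Qed.

Lemma indicator_F (X : Prop) : ~ X -> indicator X = 0.
Proof. unfold indicator; destruct (excluded_middle_informative X); tauto. Qed.

Lemma indicator_iff (X Y : Prop) : (X <-> Y) -> indicator X = indicator Y.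
Proof.
  unfold indicator; intros H.
  destruct (excluded_middle_informative X), (excluded_middle_informative Y); tauto.
Qed.

Lemma indicator_le1 (X : Prop) : indicator X <= 1.
Proof. unfold indicator; destruct (excluded_middle_informative X); lia. Qed.

Lemma countP_app l1 l2 : countP (l1 ++ l2) = countP l1 + countP l2.
Proof. induction l1 as [|a l1 IH]; simpl; [|rewrite IH]; lia. Qed.

Lemma countP_eq0 l : (forall a, In a l -> ~ P a) -> countP l = 0.
Proof.
  induction l as [|a l IH]; simpl; intros H; auto.
  rewrite indicator_F, IH; auto.
Qed.

Lemma countP_In l a : In a l -> P a -> 1 <= countP l.
Proof.
  induction l as [|b l IH]; simpl; [tauto|]; intros [->|Ha] Pa.
  - rewrite indicator_T by auto; lia.
  - specialize (IH Ha Pa); lia.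
Qed.

Lemma countP_exists l : 1 <= countP l -> exists a, In a l /\ P a.
Proof.
  induction l as [|b l IH]; simpl; intros H; [lia|].
  unfold indicator in H; destruct (excluded_middle_informative (P b)).
  - exists b; auto.
  - destruct IH as [a [Ha Pa]]; [lia | exists a; auto].
Qed.

Lemma countP_le1_unique l a b :
  countP l <= 1 -> In a l -> In b l -> P a -> P b -> a = b.
Proof.
  induction l as [|c l IH]; simpl; intros H Ha Hb Pa Pb; [contradiction|].
  destruct Ha as [Ha|Ha], Hb as [Hb|Hb]; try congruence.
  - subst; rewrite indicator_T in H by auto; pose proof (countP_In _ _ Hb Pb); lia.
  - subst; rewrite indicator_T in H by auto; pose proof (countP_In _ _ Ha Pa); lia.
  - apply IH; auto; pose proof (indicator_le1 (P c)); lia.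
Qed.

Lemma countP_nth_exists l d : 1 <= countP l -> exists i, i < length l /\ P (nth i l d).
Proof.
  induction l as [|b l IH]; simpl; intros H; [lia|].
  unfold indicator in H; destruct (excluded_middle_informative (P b)).
  - exists 0; split; auto; lia.
  - destruct IH as [i [Hi Pi]]; [lia|]; exists (S i); simpl; split; auto; lia.
Qed.

Lemma countP_ge2_nth l d :
  2 <= countP l <-> exists i j, i < j /\ j < length l /\ P (nth i l d) /\ P (nth j l d).
Proof.
  induction l as [|b l IH]; simpl; split.
  - lia.
  - intros (i & j & _ & Hj & _); lia.
  - unfold indicator; destruct (excluded_middle_informative (P b)); intros H.
    + destruct (countP_nth_exists l d) as [j [Hj Pj]]; [lia|].
      exists 0, (S j); simpl; repeat split; auto; lia.
    + destruct (proj1 IH) as (i & j & Hij & Hj & Pi & Pj); [lia|].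
      exists (S i), (S j); simpl; repeat split; auto; lia.
  - intros ([|i] & [|j] & Hij & Hj & Pi & Pj); try lia.
    + rewrite indicator_T by auto.
      pose proof (countP_In _ _ (@nth_In _ j l d ltac:(lia)) Pj); lia.
    + assert (2 <= countP l) by (apply IH; exists i, j; simpl in *; repeat split; auto; lia).
      lia.
Qed.

End Counting.

Arguments countP {A} P l.
Arguments countP_eq0 {A P l}.
Arguments countP_In {A P l a}.
Arguments countP_exists {A P l}.
Arguments countP_le1_unique {A P l a b}.
Arguments countP_nth_exists {A P l} d.
Arguments countP_ge2_nth {A P l} d.

Section CountingMore.

Context {A B : Type}.

Lemma countP_ext (P Q : A -> Prop) l :
  (forall a, In a l -> (P a <-> Q a)) -> countP P l = countP Q l.
Proof.
  induction l as [|a l IH]; simpl; intros H; auto.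
  rewrite IH by auto; f_equal; apply indicator_iff; auto.
Qed.

Lemma countP_map (P : B -> Prop) (f : A -> B) l :
  countP P (map f l) = countP (fun a => P (f a)) l.
Proof. induction l; simpl; auto. Qed.

Lemma countP_flat_map (P : B -> Prop) (Q : A -> Prop) (f : A -> list B) l :
  (forall a, In a l -> countP P (f a) = indicator (Q a)) -> countP P (flat_map f l) = countP Q l.
Proof. induction l; simpl; intros H; auto; rewrite countP_app, H, IHl; auto. Qed.

End CountingMore.

Section Pieces.

Context {S : Type}.
Implicit Types (l : list (piece S)) (p q : piece S) (h : Config S -> Config S) (k : Config S).

Definition brick_cover (bs : list (S -> word)) : Prop :=
  Forall (@fin_supp S) bs /\ forall k, countP (fun phi => in_brick phi k) bs = 1.

Lemma brick_partition_cover bs : brick_partition bs <-> brick_cover bs.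
Proof.
  unfold brick_partition, brick_cover; set (d := (fun _ => []) : S -> word).
  split; intros [Hf H]; split; auto.
  - destruct H as [Hc Hd]; intros k.
    destruct (Hc k) as [i [Hi Hk]].
    pose proof (countP_In (P := fun phi => in_brick phi k) (nth_In bs d Hi) Hk).
    enough (~ 2 <= countP (fun phi => in_brick phi k) bs) by lia.
    rewrite (countP_ge2_nth d); intros (i' & j' & Hij & Hj & Pi & Pj).
    enough (i' = j') by lia; apply (Hd k); auto; lia.
  - split.
    + intros k; apply (countP_nth_exists (P := fun phi => in_brick phi k) d); rewrite H; auto.
    + intros k i j Hi Hj Pi Pj.
      destruct (Nat.lt_total i j) as [Hij|[Hij|Hij]]; auto; exfalso;
        [ assert (2 <= countP (fun phi => in_brick phi k) bs)
            by (apply (countP_ge2_nth d); exists i, j; auto)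
        | assert (2 <= countP (fun phi => in_brick phi k) bs)
            by (apply (countP_ge2_nth d); exists j, i; auto) ];
        specialize (H k); lia.
Qed.

Section Cover.

Context {l : list (piece S)} {f : piece S -> S -> word}.
Hypothesis Hcover : brick_cover (map f l).

Lemma brick_cover_exists k : exists p, In p l /\ in_brick (f p) k.
Proof.
  destruct Hcover as [_ Hc]; specialize (Hc k); rewrite countP_map in Hc.
  apply countP_exists; lia.
Qed.

Lemma brick_cover_le1 k : countP (fun p => in_brick (f p) k) l <= 1.
Proof. destruct Hcover as [_ Hc]; specialize (Hc k); rewrite countP_map in Hc; lia. Qed.

Lemma brick_cover_fin_supp p : In p l -> fin_supp (f p).
Proof. destruct Hcover as [Hf _]; rewrite Forall_forall in Hf; intros; apply Hf, in_map; auto. Qed.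

End Cover.

Definition twist_piece p : Config S -> Config S := twist (pdom p) (pcod p) (pgam p).

Definition agrees l h : Prop :=
  forall p, In p l -> forall k, in_brick (pdom p) k -> h k = twist_piece p k.

(* The identity outside the union of the domain bricks; on overlaps some piece is chosen. *)
Definition piecewise l k : Config S :=
  match excluded_middle_informative (exists p, In p l /\ in_brick (pdom p) k) with
  | left H => twist_piece (proj1_sig (constructive_indefinite_description _ H)) k
  | right _ => k
  end.

Lemma piecewise_agrees l :
  (forall k, countP (fun p => in_brick (pdom p) k) l <= 1) -> agrees l (piecewise l).
Proof.
  intros Hc p Hp k Hk; unfold piecewise.
  destruct (excluded_middle_informative _) as [H|H]; [|exfalso; eauto].
  destruct (constructive_indefinite_description _ H) as [q [Hq Hqk]]; simpl.
  replace q with p; auto; apply (countP_le1_unique (Hc k)); auto.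
Qed.

Lemma piecewise_agrees_cover {l} : brick_cover (map (@pdom S) l) -> agrees l (piecewise l).
Proof. intros Hd; apply piecewise_agrees, (brick_cover_le1 Hd). Qed.

Definition inv_piece p : piece S := Piece (pcod p) (pdom p) (perm_inv (pgam p)).

Lemma agrees_continuous l h :
  (forall k, exists p, In p l /\ in_brick (pdom p) k) ->
  (forall p, In p l -> fin_supp (pdom p)) -> agrees l h -> continuous_cfg h.
Proof.
  intros Hcov Hfin Hag k chi Hchi Hb.
  destruct (Hcov k) as [p [Hp Hk]].
  destruct p as [phi psi g]; simpl in *.
  set (m := fun t => Nat.max (length (psi t)) (length (chi t))).
  set (nd := fun u => length (phi u) + m (pfun g u) - length (psi (pfun g u))).
  assert (Hhk : h k = twist phi psi g k) by apply (Hag _ Hp k Hk).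
  exists (cylinder k nd); split; [|split].
  - destruct (Hfin _ Hp) as [L1 HL1], Hchi as [L2 HL2].
    apply fin_supp_cylinder with (L1 ++ map (pinv g) L2).
    intros u Hu; rewrite in_app_iff in Hu.
    assert (E1 : phi u = []) by (apply HL1; tauto).
    assert (E2 : chi (pfun g u) = []).
    { apply HL2; intros Hin; apply Hu; right; rewrite <- (pfunK g u); apply in_map; auto. }
    unfold nd, m; rewrite E1, E2; simpl; lia.
  - apply in_cylinder; auto.
  - intros k' Hk'.
    assert (Hk'phi : in_brick phi k')
      by (apply in_brick_cylinder with k nd; auto; intros u; unfold nd, m; lia).
    rewrite (Hag _ Hp k' Hk'phi).
    apply in_brick_cylinder with (twist phi psi g k) m.
    + rewrite <- Hhk; auto.
    + intros t; unfold m; lia.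
    + apply (@in_cylinder_twist S phi psi g k nd m); auto;
        intros; unfold nd, m; lia.
Qed.

Lemma agrees_homeo l h :
  brick_cover (map (@pdom S) l) -> brick_cover (map (@pcod S) l) -> agrees l h -> is_homeo h.
Proof.
  intros Hd Hc Hag.
  assert (Hag' : agrees (map inv_piece l) (piecewise (map inv_piece l))).
  { apply piecewise_agrees; intros k; rewrite countP_map; apply (brick_cover_le1 Hc). }
  assert (Hinv : forall p, In p l -> forall k, in_brick (pcod p) k ->
            piecewise (map inv_piece l) k = twist_piece (inv_piece p) k).
  { intros p Hp k Hk; apply Hag'; [apply in_map|]; auto. }
  exists (piecewise (map inv_piece l)); split; [|split; [|split]].
  - intros k; destruct (brick_cover_exists Hd k) as [p [Hp Hk]].
    rewrite (Hag p Hp k Hk), (Hinv p Hp) by apply in_brick_twist.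
    apply twistK; auto.
  - intros k; destruct (brick_cover_exists Hc k) as [p [Hp Hk]].
    rewrite (Hinv p Hp k Hk), (Hag p Hp) by apply in_brick_twist.
    apply twistVK; auto.
  - apply agrees_continuous with l; auto.
    + apply brick_cover_exists; auto.
    + apply brick_cover_fin_supp; auto.
  - apply agrees_continuous with (map inv_piece l); auto.
    + intros k; destruct (brick_cover_exists Hc k) as [p [Hp Hk]].
      exists (inv_piece p); split; auto; apply in_map; auto.
    + intros q Hq; apply in_map_iff in Hq; destruct Hq as [p [<- Hp]].
      apply (brick_cover_fin_supp Hc); auto.
Qed.

Lemma agrees_cod_cover l h h' :
  (forall k, h' (h k) = k) -> (forall k, h (h' k) = k) ->
  brick_cover (map (@pdom S) l) -> Forall (@fin_supp S) (map (@pcod S) l) -> agrees l h ->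
  brick_cover (map (@pcod S) l).
Proof.
  intros E1 E2 [_ Hd] Hfc Hag; split; auto; intros k.
  specialize (Hd (h' k)); rewrite countP_map in *; rewrite <- Hd.
  apply countP_ext; intros p Hp; split; intros Hk.
  - set (x := twist (pcod p) (pdom p) (perm_inv (pgam p)) k).
    assert (Hx : h x = k) by (unfold x; rewrite (Hag p Hp) by apply in_brick_twist; apply twistVK; auto).
    rewrite <- Hx, E1; apply in_brick_twist.
  - rewrite <- (E2 k), (Hag p Hp _ Hk); apply in_brick_twist.
Qed.

Lemma twisted_by_intro (P : perm S -> Prop) l h :
  brick_cover (map (@pdom S) l) -> brick_cover (map (@pcod S) l) ->
  (forall p, In p l -> P (pgam p)) -> agrees l h -> twisted_by P h.
Proof.
  intros Hd Hc HP Hag; split; [apply agrees_homeo with l; auto|].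
  exists l; rewrite !brick_partition_cover, !Forall_forall; auto.
Qed.

Lemma twisted_by_elim (P : perm S -> Prop) h :
  twisted_by P h -> exists l, brick_cover (map (@pdom S) l) /\ brick_cover (map (@pcod S) l) /\
    (forall p, In p l -> P (pgam p)) /\ agrees l h.
Proof.
  intros [_ [l [Hd [Hc [HP Hag]]]]]; exists l.
  rewrite !brick_partition_cover, !Forall_forall in *; auto.
Qed.

End Pieces.

Arguments twisted_by_elim {S P h}.

Section CompPiece.

Context {S : Type}.
Variables (p q : piece S) (x : Config S).

(* Depths of the common refinement of [B(pcod p)] and [B(pdom q)] around [twist_piece p x],
   and of its preimage and image. *)
Definition mid_depth t := Nat.max (length (pcod p t)) (length (pdom q t)).
Definition comp_dom_depth u :=
  length (pdom p u) + mid_depth (pfun (pgam p) u) - length (pcod p (pfun (pgam p) u)).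
Definition comp_cod_depth t :=
  length (pcod q t) + mid_depth (pinv (pgam q) t) - length (pdom q (pinv (pgam q) t)).

Definition comp_piece : piece S :=
  Piece (cylinder x comp_dom_depth)
        (cylinder (twist_piece q (twist_piece p x)) comp_cod_depth)
        (perm_comp (pgam q) (pgam p)).

Hypotheses (Hx : in_brick (pdom p) x) (Hqx : in_brick (pdom q) (twist_piece p x)).

Lemma in_mid_cylinder z :
  in_brick (cylinder (twist_piece p x) mid_depth) z <-> in_brick (pcod p) z /\ in_brick (pdom q) z.
Proof.
  assert (Hpx : in_brick (pcod p) (twist_piece p x)) by apply in_brick_twist.
  split.
  - intros H; split; apply in_brick_cylinder with (twist_piece p x) mid_depth; auto;
      intros; unfold mid_depth; lia.
  - intros [H1 H2]; apply in_cylinder_max; auto.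
Qed.

Lemma in_comp_piece k :
  in_brick (pdom comp_piece) k <-> in_brick (pdom p) k /\ in_brick (pdom q) (twist_piece p k).
Proof.
  split.
  - intros H.
    assert (Hk : in_brick (pdom p) k)
      by (apply in_brick_cylinder with x comp_dom_depth; auto;
          intros; unfold comp_dom_depth, mid_depth; lia).
    split; auto; apply (in_mid_cylinder (twist_piece p k)).
    apply (@in_cylinder_twist S (pdom p) (pcod p) (pgam p) x comp_dom_depth mid_depth);
      auto; intros; unfold comp_dom_depth, mid_depth; lia.
  - intros [Hk Hq].
    apply (@in_cylinder_twist S (pdom p) (pcod p) (pgam p) x comp_dom_depth mid_depth);
      auto; try (intros; unfold comp_dom_depth, mid_depth; lia).
    apply in_mid_cylinder; split; auto; apply in_brick_twist.
Qed.

Lemma twist_comp_piece k :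
  in_brick (pdom comp_piece) k -> twist_piece q (twist_piece p k) = twist_piece comp_piece k.
Proof.
  intros H.
  assert (Hmid : in_brick (cylinder (twist_piece p x) mid_depth) (twist_piece p k))
    by (apply in_mid_cylinder; split; [apply in_brick_twist | apply in_comp_piece; auto]).
  assert (Ep : twist_piece p k =
                twist (cylinder x comp_dom_depth) (cylinder (twist_piece p x) mid_depth) (pgam p) k)
    by (apply twist_cylinder; auto; intros; unfold comp_dom_depth, mid_depth; lia).
  assert (Eq : twist_piece q (twist_piece p k) =
                twist (cylinder (twist_piece p x) mid_depth) (pcod comp_piece) (pgam q) (twist_piece p k)).
  { apply twist_cylinder; auto; try (intros; unfold comp_cod_depth, mid_depth; lia).
    intros u; unfold comp_cod_depth; rewrite pfunK; unfold mid_depth; lia. }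
  rewrite Eq, Ep; apply twist_twist; reflexivity.
Qed.

Lemma fin_supp_comp_piece :
  fin_supp (pdom p) -> fin_supp (pcod p) -> fin_supp (pdom q) -> fin_supp (pcod q) ->
  fin_supp (pdom comp_piece) /\ fin_supp (pcod comp_piece).
Proof.
  intros [L1 H1] [L2 H2] [L3 H3] [L4 H4]; split.
  - apply fin_supp_cylinder with (L1 ++ map (pinv (pgam p)) L3); intros u Hu.
    rewrite in_app_iff in Hu; unfold comp_dom_depth, mid_depth.
    rewrite H1, (H3 (pfun (pgam p) u)); simpl; try lia; [|tauto].
    intros Hin; apply Hu; right; rewrite <- (pfunK (pgam p) u); apply in_map; auto.
  - apply fin_supp_cylinder with (L4 ++ map (pfun (pgam q)) L2); intros t Ht.
    rewrite in_app_iff in Ht; unfold comp_cod_depth, mid_depth.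
    rewrite H4, (H2 (pinv (pgam q) t)); simpl; try lia; [|tauto].
    intros Hin; apply Ht; right; rewrite <- (pinvK (pgam q) t); apply in_map; auto.
Qed.

End CompPiece.

Arguments in_comp_piece {S p q x}.
Arguments twist_comp_piece {S p q x}.

Section TwistedGroup.

Context {S : Type} (P : perm S -> Prop).
Implicit Types (l : list (piece S)) (p q : piece S) (h : Config S -> Config S).

Definition comp_pieces_pair p q : list (piece S) :=
  match excluded_middle_informative
          (exists x, in_brick (pdom p) x /\ in_brick (pdom q) (twist_piece p x)) with
  | left H => [comp_piece p q (proj1_sig (constructive_indefinite_description _ H))]
  | right _ => []
  end.

Definition comp_pieces l1 l2 : list (piece S) :=
  flat_map (fun p => flat_map (comp_pieces_pair p) l2) l1.

Lemma In_comp_pieces l1 l2 r : In r (comp_pieces l1 l2) ->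
  exists p q x, In p l1 /\ In q l2 /\ in_brick (pdom p) x /\
    in_brick (pdom q) (twist_piece p x) /\ r = comp_piece p q x.
Proof.
  unfold comp_pieces; rewrite in_flat_map; intros [p [Hp Hr]].
  rewrite in_flat_map in Hr; destruct Hr as [q [Hq Hr]].
  unfold comp_pieces_pair in Hr; destruct (excluded_middle_informative _) as [H|H]; [|destruct Hr].
  destruct (constructive_indefinite_description _ H) as [x [Hx1 Hx2]]; simpl in Hr.
  destruct Hr as [<-|[]]; exists p, q, x; auto.
Qed.

Arguments In_comp_pieces {l1 l2 r}.

Section Comp.

Context {l1 l2 : list (piece S)} {h1 h2 : Config S -> Config S}.
Hypotheses (Hd1 : brick_cover (map (@pdom S) l1)) (Hc1 : brick_cover (map (@pcod S) l1))
  (Hd2 : brick_cover (map (@pdom S) l2)) (Hc2 : brick_cover (map (@pcod S) l2))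
  (Ha1 : agrees l1 h1) (Ha2 : agrees l2 h2).

Lemma agrees_comp_pieces : agrees (comp_pieces l1 l2) (fun k => h2 (h1 k)).
Proof.
  intros r Hr k Hk; destruct (In_comp_pieces Hr) as (p & q & x & Hp & Hq & Hx1 & Hx2 & ->).
  destruct (proj1 (in_comp_piece Hx1 Hx2 k) Hk) as [Hkp Hkq].
  rewrite (Ha1 p Hp k Hkp), (Ha2 q Hq _ Hkq); apply twist_comp_piece; auto.
Qed.

Lemma fin_supp_comp_pieces r : In r (comp_pieces l1 l2) ->
  fin_supp (pdom r) /\ fin_supp (pcod r).
Proof.
  intros Hr; destruct (In_comp_pieces Hr) as (p & q & x & Hp & Hq & _ & _ & ->).
  apply fin_supp_comp_piece;
    [apply (brick_cover_fin_supp Hd1) | apply (brick_cover_fin_supp Hc1)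
    |apply (brick_cover_fin_supp Hd2) | apply (brick_cover_fin_supp Hc2)]; auto.
Qed.

Lemma count_comp_pieces_pair p q k : In p l1 ->
  countP (fun r => in_brick (pdom r) k) (comp_pieces_pair p q) =
  indicator (in_brick (pdom p) k /\ in_brick (pdom q) (h1 k)).
Proof.
  intros Hp; unfold comp_pieces_pair; destruct (excluded_middle_informative _) as [H|H].
  - destruct (constructive_indefinite_description _ H) as [x [Hx1 Hx2]]; cbn -[comp_piece indicator].
    rewrite Nat.add_0_r; apply indicator_iff; rewrite in_comp_piece by auto.
    split; intros [A1 A2]; split; auto; rewrite (Ha1 p Hp k A1) in *; auto.
  - simpl; rewrite indicator_F; auto; intros [A1 A2]; apply H; exists k.
    rewrite (Ha1 p Hp k A1) in A2; auto.
Qed.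

Lemma brick_cover_comp_pieces : brick_cover (map (@pdom S) (comp_pieces l1 l2)).
Proof.
  split.
  - rewrite Forall_forall; intros phi Hphi; apply in_map_iff in Hphi.
    destruct Hphi as [r [<- Hr]]; apply fin_supp_comp_pieces; auto.
  - intros k; destruct Hd1 as [_ Hk1]; specialize (Hk1 k); rewrite countP_map in *.
    rewrite <- Hk1; apply countP_flat_map; intros p Hp.
    rewrite countP_flat_map with (Q := fun q => in_brick (pdom p) k /\ in_brick (pdom q) (h1 k))
      by (intros; apply count_comp_pieces_pair; auto).
    destruct (excluded_middle_informative (in_brick (pdom p) k)) as [Hk|Hk].
    + rewrite indicator_T by auto; destruct Hd2 as [_ Hk2]; specialize (Hk2 (h1 k)).
      rewrite countP_map in Hk2; rewrite <- Hk2; apply countP_ext; tauto.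
    + rewrite indicator_F by auto; apply countP_eq0; tauto.
Qed.

End Comp.

Lemma twisted_comp h1 h2 :
  (forall g g', P g -> P g' -> P (perm_comp g g')) ->
  twisted_by P h1 -> twisted_by P h2 -> twisted_by P (fun k => h2 (h1 k)).
Proof.
  intros HP Hh1 Hh2.
  destruct (proj1 Hh1) as [h1' [E1 [E1' _]]], (proj1 Hh2) as [h2' [E2 [E2' _]]].
  destruct (twisted_by_elim Hh1) as (l1 & Hd1 & Hc1 & HP1 & Ha1).
  destruct (twisted_by_elim Hh2) as (l2 & Hd2 & Hc2 & HP2 & Ha2).
  assert (Hd : brick_cover (map (@pdom S) (comp_pieces l1 l2)))
    by (apply (brick_cover_comp_pieces (h1 := h1)); auto).
  apply twisted_by_intro with (comp_pieces l1 l2); auto.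
  - apply agrees_cod_cover with (h := fun k => h2 (h1 k)) (h' := fun k => h1' (h2' k)).
    + intros k; rewrite E2, E1; auto.
    + intros k; rewrite E1', E2'; auto.
    + exact Hd.
    + rewrite Forall_forall; intros psi Hpsi; apply in_map_iff in Hpsi.
      destruct Hpsi as [r [<- Hr]]; apply (fin_supp_comp_pieces Hd1 Hc1 Hd2 Hc2); auto.
    + apply agrees_comp_pieces; auto.
  - intros r Hr; destruct (In_comp_pieces Hr) as (p & q & x & Hp & Hq & _ & _ & ->).
    apply HP; auto.
  - apply agrees_comp_pieces; auto.
Qed.

Lemma twisted_inv f f' :
  (forall g, P g -> P (perm_inv g)) ->
  twisted_by P f -> (forall k, f' (f k) = k) -> (forall k, f (f' k) = k) -> twisted_by P f'.
Proof.
  intros HP Hf E1 E2.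
  destruct (twisted_by_elim Hf) as (l & Hd & Hc & HPl & Ha).
  apply twisted_by_intro with (map inv_piece l).
  - rewrite map_map; exact Hc.
  - rewrite map_map; exact Hd.
  - intros q Hq; apply in_map_iff in Hq; destruct Hq as [p [<- Hp]]; apply HP, HPl; auto.
  - intros q Hq k Hk; apply in_map_iff in Hq; destruct Hq as [p [<- Hp]]; simpl in Hk.
    set (x := twist (pcod p) (pdom p) (perm_inv (pgam p)) k).
    assert (Hx : f x = k) by (unfold x; rewrite (Ha p Hp) by apply in_brick_twist; apply twistVK; auto).
    rewrite <- Hx at 1; rewrite E1; reflexivity.
Qed.

Lemma twisted_mono (Q : perm S -> Prop) f :
  (forall g, P g -> Q g) -> twisted_by P f -> twisted_by Q f.
Proof.
  intros H Hf; destruct (twisted_by_elim Hf) as (l & Hd & Hc & HPl & Ha).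
  apply twisted_by_intro with l; auto.
Qed.

End TwistedGroup.

Lemma is_prefix_nil x : is_prefix [] x.
Proof. intros i Hi; simpl in Hi; lia. Qed.

Lemma is_prefix_cons b w x : is_prefix (b :: w) x <-> x 0 = b /\ is_prefix w (wdrop 1 x).
Proof.
  unfold is_prefix, wdrop; split.
  - intros H; split; [symmetry; apply (H 0); simpl; lia|].
    intros i Hi; rewrite Nat.add_1_r; apply (H (S i)); simpl; lia.
  - intros [H0 H] [|i] Hi; simpl; [auto|].
    rewrite <- Nat.add_1_r; apply H; simpl in Hi; lia.
Qed.

Lemma is_prefix_app v u x : is_prefix (v ++ u) x -> is_prefix v x.
Proof.
  unfold is_prefix; intros H i Hi; rewrite <- H by (rewrite length_app; lia).
  rewrite app_nth1; auto.
Qed.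

Definition is_prefixb (w : word) (x : Cantor) : bool :=
  forallb (fun i => Bool.eqb (nth i w false) (x i)) (seq 0 (length w)).

Lemma is_prefixP w x : is_prefix w x <-> is_prefixb w x = true.
Proof.
  unfold is_prefix, is_prefixb; rewrite forallb_forall; split.
  - intros H i Hi; apply in_seq in Hi; apply Bool.eqb_true_iff, H; lia.
  - intros H i Hi; apply Bool.eqb_true_iff, H, in_seq; lia.
Qed.

Definition complete_prefix_code (ws : list word) : Prop :=
  forall x, countP (fun w => is_prefix w x) ws = 1.

Lemma countP_is_prefix ws x :
  countP (fun w => is_prefix w x) ws = length (filter (fun w => is_prefixb w x) ws).
Proof.
  induction ws as [|w ws IH]; simpl; auto; rewrite IH.
  destruct (is_prefixb w x) eqn:E; simpl.
  - rewrite indicator_T; auto; apply is_prefixP; auto.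
  - rewrite indicator_F; auto; rewrite is_prefixP, E; discriminate.
Qed.

Lemma complete_prefix_code2 a : complete_prefix_code [[a]; [negb a]].
Proof. intros x; rewrite countP_is_prefix; cbn; destruct a, (x 0); reflexivity. Qed.

Lemma complete_prefix_code3 a b :
  complete_prefix_code [[a; b]; [a; negb b]; [negb a]] /\
  complete_prefix_code [[a]; [negb a; false]; [negb a; true]].
Proof.
  split; intros x; rewrite countP_is_prefix; cbn; destruct a, b, (x 0), (x 1); reflexivity.
Qed.

(* The code [1], [01], ..., [0^(n-1) 1], [0^n] of n + 1 words. *)
Fixpoint chain_code (n : nat) : list word :=
  match n with 0 => [[]] | S n => [true] :: map (cons false) (chain_code n) end.

Lemma length_chain_code n : length (chain_code n) = S n.
Proof. induction n; simpl; auto; rewrite length_map; auto. Qed.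

Lemma complete_chain_code n : complete_prefix_code (chain_code n).
Proof.
  induction n as [|n IH]; intros x; simpl.
  - rewrite indicator_T; auto; apply is_prefix_nil.
  - rewrite countP_map; destruct (x 0) eqn:Hx.
    + rewrite indicator_T by (apply is_prefix_cons; split; auto; apply is_prefix_nil).
      rewrite countP_eq0; auto; intros w _ Hw; apply is_prefix_cons in Hw.
      destruct Hw; congruence.
    + rewrite indicator_F by (rewrite is_prefix_cons; intros [H _]; congruence).
      rewrite <- (IH (wdrop 1 x)); apply countP_ext; intros w _; rewrite is_prefix_cons; tauto.
Qed.

Section BricksAt.

Context {S : Type}.
Implicit Types (s t : S) (w : word) (k : Config S).

(* [psi_s s] is [brick_at s [true]]. *)
Definition brick_at s w : S -> word :=
  fun t => if excluded_middle_informative (t = s) then w else [].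

Lemma in_brick_at s w k : in_brick (brick_at s w) k <-> is_prefix w (k s).
Proof.
  unfold in_brick, brick_at; split.
  - intros H; specialize (H s); destruct (excluded_middle_informative (s = s)); tauto.
  - intros H t; destruct (excluded_middle_informative (t = s)) as [->|]; auto.
    apply is_prefix_nil.
Qed.

Lemma in_brick_at1 s b k : in_brick (brick_at s [b]) k <-> k s 0 = b.
Proof.
  rewrite in_brick_at, is_prefix_cons; split; [tauto|].
  intros; split; auto; apply is_prefix_nil.
Qed.

Lemma brick_at_nil s : brick_at s [] = fun _ => [].
Proof.
  apply functional_extensionality; intros t; unfold brick_at.
  destruct (excluded_middle_informative (t = s)); auto.
Qed.

Lemma brick_cover_at s ws : complete_prefix_code ws -> brick_cover (map (brick_at s) ws).
Proof.
  intros H; split.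
  - rewrite Forall_forall; intros phi Hphi; apply in_map_iff in Hphi.
    destruct Hphi as [w [<- _]]; exists [s]; intros t Ht; unfold brick_at.
    destruct (excluded_middle_informative (t = s)) as [->|]; simpl in *; tauto.
  - intros k; rewrite countP_map, <- (H (k s)); apply countP_ext; intros; apply in_brick_at.
Qed.

End BricksAt.

Section Subgroup.

Context {S : Type} {G : perm S -> Prop} (HG : is_subgroup G).

Lemma subgroup_id g : (forall x, pfun g x = x) -> G g.
Proof.
  destruct HG as [[e [He E]] [_ [_ Hext]]]; intros Hg.
  apply (Hext e); auto; intros; rewrite E, Hg; auto.
Qed.

Lemma subgroup_comp g h : G g -> G h -> G (perm_comp g h).
Proof.
  destruct HG as [_ [Hmul [_ Hext]]]; intros Hg Hh.
  destruct (Hmul g h Hg Hh) as [gh [Hgh E]]; apply (Hext gh); auto.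
Qed.

Lemma subgroup_inv g : G g -> G (perm_inv g).
Proof.
  destruct HG as [_ [_ [Hinv Hext]]]; intros Hg.
  destruct (Hinv g Hg) as [gi [Hgi E]]; apply (Hext gi); auto.
Qed.

Lemma SVG_of_identity_pieces l h :
  brick_cover (map (@pdom S) l) -> brick_cover (map (@pcod S) l) ->
  (forall p, In p l -> pgam p = perm_id S) -> agrees l h -> SVG G h.
Proof.
  intros Hd Hc Hid Ha; apply twisted_by_intro with l; auto.
  intros p Hp; rewrite Hid by auto; apply subgroup_id; reflexivity.
Qed.

Lemma SVG_id : SVG G (fun k => k).
Proof.
  apply SVG_of_identity_pieces with [Piece (fun _ => []) (fun _ => []) (perm_id S)].
  1, 2: split; [repeat constructor; exists []; auto|];
        intros k; simpl; rewrite indicator_T; auto; intros t; apply is_prefix_nil.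
  - intros p [<-|[]]; reflexivity.
  - intros p [<-|[]] k _; symmetry; apply twist_id; [intros t; apply is_prefix_nil | reflexivity].
Qed.

End Subgroup.

Definition SV_iota1 {S : Type} (G : perm S -> Prop) (s : S) (f : Config S -> Config S) : Prop :=
  SV f \/ exists g, G g /\ f = iota1 s g.

Section SVGContainsGenerated.

Context {S : Type} {G : perm S -> Prop} (HG : is_subgroup G) (s : S).

Lemma SVG_iota1 g : G g -> SVG G (iota1 s g).
Proof.
  intros Hg.
  set (l := [Piece (brick_at s [false]) (brick_at s [false]) (perm_id S);
             Piece (brick_at s [true]) (brick_at s [true]) g]).
  assert (Hcov : brick_cover (map (brick_at s) [[false]; [true]]))
    by apply brick_cover_at, complete_prefix_code2.
  apply twisted_by_intro with l; auto.
  - intros p [<-|[<-|[]]]; simpl; auto; apply (subgroup_id HG); reflexivity.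
  - intros p [<-|[<-|[]]] k Hk; simpl in Hk; apply in_brick_at1 in Hk;
      unfold iota1; rewrite Hk; [|reflexivity].
    symmetry; apply twist_id; [apply in_brick_at1; auto | reflexivity].
Qed.

Lemma generated_SVG h : generated (SV_iota1 G s) h -> SVG G h.
Proof.
  induction 1 as [f [Hf|[g [Hg ->]]]| |f f' _ IH1 _ IH2|f f' _ IH E1 E2].
  - apply twisted_mono with (2 := Hf); intros g Hg; apply (subgroup_id HG); auto.
  - apply SVG_iota1; auto.
  - apply (SVG_id HG).
  - apply twisted_comp; auto; intros; apply (subgroup_comp HG); auto.
  - apply twisted_inv with f; auto; intros; apply (subgroup_inv HG); auto.
Qed.

End SVGContainsGenerated.

Section LocalTwists.

Context {S : Type}.
Implicit Types (a b : S -> word) (g : perm S) (k : Config S) (l : list (piece S)).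

(* [tau g] read through the chart [Phi b] of the brick [B(b)], extended by the identity. *)
Definition local_twist b g k : Config S :=
  if excluded_middle_informative (in_brick b k) then twist b b g k else k.

Lemma local_twist_conj (D D' : Config S -> Config S) a b g :
  (forall k, D' (D k) = k) -> (forall k, D (D' k) = k) ->
  (forall k, in_brick a k -> D k = twist a b (perm_id S) k) ->
  local_twist a g = fun k => D' (local_twist b g (D k)).
Proof.
  intros E1 E2 HD.
  assert (Hback : forall k, in_brick b (D k) -> in_brick a k).
  { intros k Hk; set (k' := twist b a (perm_id S) (D k)).
    assert (Hk' : in_brick a k') by apply in_brick_twist.
    assert (Ek : D k' = D k).
    { rewrite HD by auto; unfold k'; rewrite (@twist_twist S b a b (perm_id S) (perm_id S) (perm_id S))
        by reflexivity.
      apply twist_id; auto. }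
    rewrite <- (E1 k), <- Ek, E1; auto. }
  apply functional_extensionality; intros k; unfold local_twist.
  destruct (excluded_middle_informative (in_brick a k)) as [Ha|Ha].
  - rewrite (HD k Ha).
    destruct (excluded_middle_informative (in_brick b (twist a b (perm_id S) k))) as [_|Hb];
      [|exfalso; apply Hb, in_brick_twist].
    rewrite (@twist_twist S a b b (perm_id S) g g), <- (E1 (twist a a g k)) by reflexivity.
    f_equal; rewrite HD by apply in_brick_twist.
    apply (@twist_twist S a a b g (perm_id S) g); reflexivity.
  - destruct (excluded_middle_informative (in_brick b (D k))) as [Hb|Hb];
      [exfalso; apply Ha, Hback; auto | rewrite E1; auto].
Qed.

Lemma iota1_local_twist s g : iota1 s g = local_twist (brick_at s [true]) g.
Proof.
  apply functional_extensionality; intros k; unfold local_twist, iota1.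
  destruct (excluded_middle_informative (in_brick (brick_at s [true]) k)) as [H|H];
    rewrite in_brick_at1 in H.
  - rewrite H; reflexivity.
  - destruct (k s 0); [tauto | reflexivity].
Qed.

Lemma twist_move_bit s g c k : k s 0 = c ->
  twist (brick_at s [c]) (brick_at (pfun g s) [c]) g k = twist (brick_at s []) (brick_at s []) g k.
Proof.
  intros Hk; rewrite brick_at_nil; apply config_ext; intros t i; rewrite !twistE; simpl.
  unfold brick_at; destruct (excluded_middle_informative (t = pfun g s)) as [->|Ht].
  - rewrite pfunK; destruct (excluded_middle_informative (s = s)); [|tauto].
    destruct i; simpl; auto; f_equal; lia.
  - destruct (excluded_middle_informative (pinv g t = s)) as [E|E].
    + exfalso; apply Ht; rewrite <- E, pinvK; auto.
    + simpl; f_equal; lia.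
Qed.

(* [tau g] twists both halves [k s 0 = c] and then moves the bit [c] from [s] to [g s]. *)
Lemma local_twist_nil_split s g :
  let l := [Piece (brick_at s [true]) (brick_at (pfun g s) [true]) (perm_id S);
            Piece (brick_at s [false]) (brick_at (pfun g s) [false]) (perm_id S)] in
  local_twist (brick_at s []) g =
  fun k => piecewise l (local_twist (brick_at s [true]) g (local_twist (brick_at s [false]) g k)).
Proof.
  intros l.
  assert (Ha : agrees l (piecewise l))
    by apply piecewise_agrees_cover, (brick_cover_at s [[true]; [false]]), complete_prefix_code2.
  apply functional_extensionality; intros k.
  unfold local_twist at 1; destruct (excluded_middle_informative _) as [_|H];
    [|exfalso; apply H, in_brick_at, is_prefix_nil].
  assert (Hmove : forall c, k s 0 = c -> in_brick (brick_at s [c]) (twist (brick_at s [c]) (brick_at s [c]) g k) ->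
            In (Piece (brick_at s [c]) (brick_at (pfun g s) [c]) (perm_id S)) l ->
            piecewise l (twist (brick_at s [c]) (brick_at s [c]) g k) = twist (brick_at s []) (brick_at s []) g k).
  { intros c Hc Hin Hp; rewrite (Ha _ Hp _ Hin); unfold twist_piece; simpl.
    rewrite (@twist_twist S _ _ _ g (perm_id S) g) by reflexivity.
    apply twist_move_bit; auto. }
  unfold local_twist; destruct (k s 0) eqn:Hk.
  - destruct (excluded_middle_informative (in_brick (brick_at s [false]) k)) as [H|_];
      [rewrite in_brick_at1 in H; congruence|].
    destruct (excluded_middle_informative (in_brick (brick_at s [true]) k)) as [_|H];
      [|rewrite in_brick_at1 in H; congruence].
    symmetry; apply Hmove; simpl; auto; apply in_brick_twist.
  - destruct (excluded_middle_informative (in_brick (brick_at s [false]) k)) as [_|H];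
      [|rewrite in_brick_at1 in H; congruence].
    destruct (excluded_middle_informative
                (in_brick (brick_at s [true]) (twist (brick_at s [false]) (brick_at s [false]) g k)))
      as [H|_].
    + exfalso; pose proof (in_brick_twist (brick_at s [false]) (brick_at s [false]) g k) as H'.
      rewrite in_brick_at1 in H, H'; congruence.
    + symmetry; apply Hmove; simpl; auto; apply in_brick_twist.
Qed.

End LocalTwists.

Lemma SV_piecewise {S : Type} {l : list (piece S)} :
  brick_cover (map (@pdom S) l) -> brick_cover (map (@pcod S) l) ->
  (forall p, In p l -> pgam p = perm_id S) -> SV (piecewise l).
Proof.
  intros Hd Hc Hid; apply twisted_by_intro with l; auto.
  - intros p Hp; rewrite Hid; auto.
  - apply piecewise_agrees_cover; auto.
Qed.

Section GeneratedLocalTwists.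

Context {S : Type} (G : perm S -> Prop) (s : S) (g : perm S) (Hg : G g).
Implicit Types (a b : S -> word) (l : list (piece S)).

Lemma generated_local_twist_transport l a b :
  brick_cover (map (@pdom S) l) -> brick_cover (map (@pcod S) l) ->
  (forall p, In p l -> pgam p = perm_id S) ->
  (forall k, in_brick a k -> piecewise l k = twist a b (perm_id S) k) ->
  generated (SV_iota1 G s) (local_twist b g) -> generated (SV_iota1 G s) (local_twist a g).
Proof.
  intros Hd Hc Hid Hab Hb.
  pose proof (SV_piecewise Hd Hc Hid) as HSV.
  destruct (proj1 HSV) as [D' [E1 [E2 _]]].
  rewrite (local_twist_conj (piecewise l) D' a b g E1 E2 Hab).
  apply gen_comp; [apply gen_inv with (piecewise l); auto; apply gen_base; left; auto|].
  apply gen_comp; auto; apply gen_base; left; auto.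
Qed.

Lemma generated_local_twist1 : generated (SV_iota1 G s) (local_twist (brick_at s [true]) g).
Proof. rewrite <- iota1_local_twist; apply gen_base; right; eauto. Qed.

Lemma generated_local_twist0 : generated (SV_iota1 G s) (local_twist (brick_at s [false]) g).
Proof.
  set (l := [Piece (brick_at s [false]) (brick_at s [true]) (perm_id S);
             Piece (brick_at s [true]) (brick_at s [false]) (perm_id S)]).
  assert (Hd : brick_cover (map (@pdom S) l))
    by apply (brick_cover_at s [[false]; [true]]), complete_prefix_code2.
  apply generated_local_twist_transport with l (brick_at s [true]); auto.
  - apply (brick_cover_at s [[true]; [false]]), complete_prefix_code2.
  - intros p [<-|[<-|[]]]; reflexivity.
  - intros k Hk; apply (piecewise_agrees_cover Hd (Piece (brick_at s [false]) (brick_at s [true]) (perm_id S)));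
      simpl; auto.
  - apply generated_local_twist1.
Qed.

Lemma generated_local_twist_nil : generated (SV_iota1 G s) (local_twist (brick_at s []) g).
Proof.
  rewrite local_twist_nil_split.
  apply gen_comp; [|apply gen_comp; [apply generated_local_twist1 | apply generated_local_twist0]].
  apply gen_base; left; apply SV_piecewise.
  - apply (brick_cover_at s [[true]; [false]]), complete_prefix_code2.
  - apply (brick_cover_at (pfun g s) [[true]; [false]]), complete_prefix_code2.
  - intros p [<-|[<-|[]]]; reflexivity.
Qed.

Lemma twist_brick_at_app v v' u k :
  in_brick (brick_at s (v ++ u)) k ->
  twist (brick_at s v) (brick_at s v') (perm_id S) k =
  twist (brick_at s (v ++ u)) (brick_at s (v' ++ u)) (perm_id S) k.
Proof.
  intros Hk; apply in_brick_at in Hk; apply config_ext; intros t i; rewrite !twistE; simpl.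
  unfold brick_at; destruct (excluded_middle_informative (t = s)) as [->|]; [|reflexivity].
  rewrite !length_app.
  destruct (Nat.ltb_spec i (length v')); destruct (Nat.ltb_spec i (length v' + length u)); try lia.
  - rewrite app_nth1; auto.
  - rewrite app_nth2, <- (Hk (i - length v' + length v)) by (rewrite ?length_app; lia).
    rewrite app_nth2 by lia; f_equal; lia.
  - f_equal; lia.
Qed.

(* The conjugating element of SV maps [c d] onto [c], [c (~d)] onto [(~c) 0] and [~c] onto
   [(~c) 1] at [s]. *)
Lemma generated_local_twist_drop2 c d u :
  generated (SV_iota1 G s) (local_twist (brick_at s (c :: u)) g) ->
  generated (SV_iota1 G s) (local_twist (brick_at s (c :: d :: u)) g).
Proof.
  set (l := [Piece (brick_at s [c; d]) (brick_at s [c]) (perm_id S);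
             Piece (brick_at s [c; negb d]) (brick_at s [negb c; false]) (perm_id S);
             Piece (brick_at s [negb c]) (brick_at s [negb c; true]) (perm_id S)]).
  destruct (complete_prefix_code3 c d) as [Hcode1 Hcode2].
  assert (Hd : brick_cover (map (@pdom S) l)) by apply (brick_cover_at s _ Hcode1).
  apply generated_local_twist_transport with l; auto.
  - apply (brick_cover_at s _ Hcode2).
  - intros p [<-|[<-|[<-|[]]]]; reflexivity.
  - intros k Hk; rewrite (piecewise_agrees_cover Hd (Piece (brick_at s [c; d]) (brick_at s [c]) (perm_id S))).
    + apply (twist_brick_at_app [c; d] [c] u); auto.
    + simpl; auto.
    + apply in_brick_at; apply in_brick_at in Hk; apply (is_prefix_app [c; d] u); auto.
Qed.

Lemma generated_local_twist w : generated (SV_iota1 G s) (local_twist (brick_at s w) g).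
Proof.
  destruct w as [|c u]; [apply generated_local_twist_nil|].
  induction u as [|d u IH].
  - destruct c; [apply generated_local_twist1 | apply generated_local_twist0].
  - apply generated_local_twist_drop2, IH.
Qed.

End GeneratedLocalTwists.

Lemma map_fst_combine {A B : Type} (l : list A) (m : list B) :
  length l = length m -> map fst (combine l m) = l.
Proof. revert m; induction l; intros [|b m] H; simpl in *; try lia; auto; rewrite IHl; auto. Qed.

Lemma map_snd_combine {A B : Type} (l : list A) (m : list B) :
  length l = length m -> map snd (combine l m) = m.
Proof. revert m; induction l; intros [|b m] H; simpl in *; try lia; auto; rewrite IHl; auto. Qed.

Section LocalTwistProducts.

Context {S : Type}.
Implicit Types (bgs : list ((S -> word) * perm S)) (k : Config S).

Fixpoint local_twists bgs : Config S -> Config S :=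
  match bgs with
  | [] => fun k => k
  | bg :: bgs' => fun k => local_twist (fst bg) (snd bg) (local_twists bgs' k)
  end.

Lemma local_twists_out bgs k :
  (forall bg, In bg bgs -> ~ in_brick (fst bg) k) -> local_twists bgs k = k.
Proof.
  induction bgs as [|bg bgs IH]; simpl; intros H; auto.
  rewrite IH by auto; unfold local_twist.
  destruct (excluded_middle_informative _); auto; exfalso; apply (H bg); auto.
Qed.

Lemma local_twists_in bgs :
  (forall k, countP (fun bg => in_brick (fst bg) k) bgs <= 1) ->
  forall bg k, In bg bgs -> in_brick (fst bg) k ->
  local_twists bgs k = twist (fst bg) (fst bg) (snd bg) k.
Proof.
  induction bgs as [|bg0 bgs IH]; simpl; intros Hc bg k Hin Hk; [destruct Hin|].
  assert (Hc' : forall k, countP (fun bg => in_brick (fst bg) k) bgs <= 1)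
    by (intros k'; specialize (Hc k'); lia).
  destruct Hin as [<-|Hin].
  - rewrite local_twists_out.
    + unfold local_twist; destruct (excluded_middle_informative _); tauto.
    + intros bg' Hbg' Hk'; specialize (Hc k); rewrite indicator_T in Hc by auto.
      pose proof (countP_In (P := fun bg => in_brick (fst bg) k) Hbg' Hk'); lia.
  - rewrite (IH Hc' bg k Hin Hk); unfold local_twist.
    destruct (excluded_middle_informative _) as [H|H]; auto; exfalso.
    set (y := twist (fst bg) (fst bg) (snd bg) k) in *.
    specialize (Hc y); rewrite indicator_T in Hc by auto.
    pose proof (countP_In (P := fun bg => in_brick (fst bg) y) Hin (in_brick_twist _ _ _ _)); lia.
Qed.

End LocalTwistProducts.

Section Factorization.

Context {S : Type}.
Variables (l : list (piece S)) (bs : list (S -> word)) (h : Config S -> Config S).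
Hypotheses (Hd : brick_cover (map (@pdom S) l)) (Hc : brick_cover (map (@pcod S) l))
  (Hbs : brick_cover bs) (Hlen : length l = length bs) (Ha : agrees l h).

Definition to_bricks : list (piece S) :=
  map (fun pb => Piece (pdom (fst pb)) (snd pb) (perm_id S)) (combine l bs).
Definition from_bricks : list (piece S) :=
  map (fun pb => Piece (snd pb) (pcod (fst pb)) (perm_id S)) (combine l bs).
Definition brick_twists : list ((S -> word) * perm S) :=
  map (fun pb => (snd pb, pgam (fst pb))) (combine l bs).

Lemma map_pdom_to_bricks : map (@pdom S) to_bricks = map (@pdom S) l.
Proof. unfold to_bricks; rewrite map_map; simpl; rewrite <- map_map, map_fst_combine; auto. Qed.

Lemma map_pcod_to_bricks : map (@pcod S) to_bricks = bs.
Proof. unfold to_bricks; rewrite map_map; simpl; exact (map_snd_combine l bs Hlen). Qed.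

Lemma map_pdom_from_bricks : map (@pdom S) from_bricks = bs.
Proof. unfold from_bricks; rewrite map_map; simpl; exact (map_snd_combine l bs Hlen). Qed.

Lemma map_pcod_from_bricks : map (@pcod S) from_bricks = map (@pcod S) l.
Proof. unfold from_bricks; rewrite map_map; simpl; rewrite <- map_map, map_fst_combine; auto. Qed.

Lemma SV_to_bricks : SV (piecewise to_bricks).
Proof.
  apply SV_piecewise; [rewrite map_pdom_to_bricks | rewrite map_pcod_to_bricks |]; auto.
  intros q Hq; apply in_map_iff in Hq; destruct Hq as [pb [<- _]]; reflexivity.
Qed.

Lemma SV_from_bricks : SV (piecewise from_bricks).
Proof.
  apply SV_piecewise; [rewrite map_pdom_from_bricks | rewrite map_pcod_from_bricks |]; auto.
  intros q Hq; apply in_map_iff in Hq; destruct Hq as [pb [<- _]]; reflexivity.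
Qed.

Lemma factor_through_bricks :
  h = fun k => piecewise from_bricks (local_twists brick_twists (piecewise to_bricks k)).
Proof.
  assert (Hto : agrees to_bricks (piecewise to_bricks)).
  { apply piecewise_agrees_cover; rewrite map_pdom_to_bricks; auto. }
  assert (Hfrom : agrees from_bricks (piecewise from_bricks)).
  { apply piecewise_agrees_cover; rewrite map_pdom_from_bricks; auto. }
  assert (Hdisj : forall k, countP (fun bg => in_brick (fst bg) k) brick_twists <= 1).
  { intros k; unfold brick_twists; rewrite countP_map; simpl.
    rewrite <- (countP_map (fun b => in_brick b k) snd), map_snd_combine by auto.
    destruct Hbs as [_ Hk]; specialize (Hk k); lia. }
  apply functional_extensionality; intros k.
  destruct (brick_cover_exists Hd k) as [p [Hp Hk]].
  rewrite <- (map_fst_combine l bs Hlen) in Hp; apply in_map_iff in Hp.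
  destruct Hp as [[p' b] [Ep Hpb]]; simpl in Ep; subst p'.
  assert (Hto_in : In (Piece (pdom p) b (perm_id S)) to_bricks)
    by exact (in_map (fun pb => Piece (pdom (fst pb)) (snd pb) (perm_id S)) _ _ Hpb).
  assert (Htw_in : In (b, pgam p) brick_twists)
    by exact (in_map (fun pb => (snd pb, pgam (fst pb))) _ _ Hpb).
  assert (Hfrom_in : In (Piece b (pcod p) (perm_id S)) from_bricks)
    by exact (in_map (fun pb => Piece (snd pb) (pcod (fst pb)) (perm_id S)) _ _ Hpb).
  rewrite (Hto _ Hto_in k Hk); unfold twist_piece; simpl.
  rewrite (local_twists_in _ Hdisj _ _ Htw_in) by apply in_brick_twist.
  rewrite (Hfrom _ Hfrom_in) by apply in_brick_twist; unfold twist_piece; simpl.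
  rewrite (@twist_twist S _ _ _ (pgam p) (perm_id S) (pgam p)),
          (@twist_twist S _ _ _ (perm_id S) (pgam p) (pgam p)) by reflexivity.
  apply (Ha p (in_combine_l _ _ _ _ Hpb) k Hk).
Qed.

End Factorization.

Lemma generated_local_twists {S : Type} (A : (Config S -> Config S) -> Prop)
    (bgs : list ((S -> word) * perm S)) :
  (forall bg, In bg bgs -> generated A (local_twist (fst bg) (snd bg))) ->
  generated A (local_twists bgs).
Proof.
  induction bgs as [|bg bgs IH]; simpl; intros H; [apply gen_id | apply gen_comp; auto].
Qed.

Lemma SVG_generated {S : Type} (G : perm S -> Prop) (s : S) h :
  SVG G h -> generated (SV_iota1 G s) h.
Proof.
  intros Hh; destruct (twisted_by_elim Hh) as (l & Hd & Hc & HG & Ha).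
  assert (Hl : length l = Nat.succ (pred (length l))).
  { destruct l; simpl; auto.
    destruct Hd as [_ Hd]; specialize (Hd (fun _ _ => false)); simpl in Hd; lia. }
  set (bs := map (brick_at s) (chain_code (pred (length l)))).
  assert (Hbs : brick_cover bs) by apply brick_cover_at, complete_chain_code.
  assert (Hlen : length l = length bs)
    by (unfold bs; rewrite length_map, length_chain_code; auto).
  rewrite (factor_through_bricks l bs h Hd Hbs Hlen Ha).
  apply gen_comp; [apply gen_base; left; apply SV_from_bricks; auto|].
  apply gen_comp; [|apply gen_base; left; apply SV_to_bricks; auto].
  apply generated_local_twists; intros bg Hbg.
  unfold brick_twists in Hbg; apply in_map_iff in Hbg; destruct Hbg as [[p b] [<- Hpb]].
  simpl; pose proof (in_combine_r _ _ _ _ Hpb) as Hb; unfold bs in Hb.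
  apply in_map_iff in Hb; destruct Hb as [w [<- _]].
  apply generated_local_twist, HG, (in_combine_l _ _ _ _ Hpb).
Qed.

Theorem proposition3p1 (S : Type)
  (G : perm S -> Prop) (HG : is_subgroup G) (s : S) :
  forall h : Config S -> Config S,
    SVG G h <->
    generated (fun f => SV f \/ exists g, G g /\ f = iota1 s g) h.
Proof.
  intros h; split; [apply SVG_generated | apply generated_SVG; auto].
Qed.
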